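(* Let $n\ge1$, let $L\subseteq\mathbb Z^n$ be a lattice, and let $(\cdot,\cdot)$ be an inner product on $\mathbb R^n$ for which the canonical basis $\vec e_1,\dots,\vec e_n$ is orthogonal. Assume $(L,(\cdot,\cdot))$ is a zonotopal lattice. Let $F$ be the linear subspace of $\mathbb R^n$ spanned by $L$ and let $\pi:\mathbb R^n\to F$ be the orthogonal projection onto $F$ with respect to $(\cdot,\cdot)$. Then $$\mathrm{DV}(L)=\pi(\mathrm{DV}(\mathbb Z^n))=\pi\big([-\tfrac12,\tfrac12]^n\big),$$ where $\mathrm{DV}(L)=\{\vec x\in F: (\vec x,\vec x)\le(\vec x-\vec v,\vec x-\vec v)\text{ for all }\vec v\in L\}$ and $\mathrm{DV}(\mathbb Z^n)=\{\vec x\in \mathbb R^n: (\vec x,\vec x)\le(\vec x-\vec v,\vec x-\vec v)\text{ for all }\vec v\in \mathbb Z^n\}$ are the Dirichlet–Voronoi polytopes with respect to $(\cdot,\cdot)$.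
   Context: A lattice $L\subseteq\mathbb Z^n$ is the $\mathbb Z$-span of finitely many linearly independent vectors of $\mathbb Z^n$. The support of $\vec v\in\mathbb R^n$ is $\underline{\vec v}=\{i: v_i\neq 0\}$. A vector $\vec u\in L$ is elementary if $\vec u\in\{-1,0,+1\}^n\setminus\{\vec 0\}$ and no nonzero vector of $L$ has support strictly contained in $\underline{\vec u}$. The pair $(L,(\cdot,\cdot))$ is a zonotopal lattice if for every $\vec v\in L\setminus\{\vec 0\}$ there is an elementary vector $\vec u\in L$ with $\underline{\vec u}\subseteq\underline{\vec v}$. *)

From HB Require Import structures.
From mathcomp Require Import all_boot all_order all_algebra.
From mathcomp Require Import classical_sets reals.
Set Implicit Arguments. Unset Strict Implicit. Unset Printing Implicit Defensive.
Import Order.TTheory GRing.Theory Num.Theory.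
Local Open Scope ring_scope.
Local Open Scope classical_set_scope.

Definition toR (R : realType) (m n : nat) (A : 'M[int]_(m, n)) : 'M[R]_(m, n) :=
  map_mx (fun z : int => z%:~R) A.

Definition lattice (k n : nat) (B : 'M[int]_(k, n)) : set 'rV[int]_n :=
  range (fun c : 'rV[int]_k => c *m B).

Definition supp (n : nat) (v : 'rV[int]_n) : {set 'I_n} :=
  finset (fun i => v ord0 i != 0).

Definition elementary (n : nat) (L : set 'rV[int]_n) (u : 'rV[int]_n) : Prop :=
  [/\ L u,
      (forall i, u ord0 i \in [:: -1; 0; 1]),
      u != 0
    & ~ (exists v, [/\ L v, v != 0 & (supp v \proper supp u)%SET])].

Definition zonotopal (n : nat) (L : set 'rV[int]_n) : Prop :=
  forall v, L v -> v != 0 ->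
    exists u, elementary L u /\ (supp u \subset supp v)%SET.

Definition ip (R : realType) (n : nat) (G : 'M[R]_n) (x y : 'rV[R]_n) : R :=
  (x *m G *m y^T) ord0 ord0.

Definition is_inner_product (R : realType) (n : nat) (G : 'M[R]_n) : Prop :=
  G^T = G /\ (forall x : 'rV[R]_n, x != 0 -> 0 < ip G x x).

(* the canonical basis is orthogonal: (e_i, e_j) = G i j = 0 for i <> j *)
Definition canonical_basis_orthogonal (R : realType) (n : nat) (G : 'M[R]_n) :=
  forall i j : 'I_n, i != j -> G i j = 0.

Definition span_lat (R : realType) (k n : nat) (B : 'M[int]_(k, n)) : set 'rV[R]_n :=
  range (fun c : 'rV[R]_k => c *m toR R B).

Definition DV_lat (R : realType) (k n : nat) (G : 'M[R]_n) (B : 'M[int]_(k, n))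
  : set 'rV[R]_n :=
  [set x | span_lat (R:=R) B x /\
     forall v, lattice B v -> ip G x x <= ip G (x - toR R v) (x - toR R v)].

Definition DV_Zn (R : realType) (n : nat) (G : 'M[R]_n) : set 'rV[R]_n :=
  [set x | forall v : 'rV[int]_n, ip G x x <= ip G (x - toR R v) (x - toR R v)].

Definition cube (R : realType) (n : nat) : set 'rV[R]_n :=
  [set x | forall i, - (1 / 2) <= x ord0 i <= 1 / 2].

Definition is_orth_proj (R : realType) (n : nat) (G : 'M[R]_n) (F : set 'rV[R]_n)
  (x y : 'rV[R]_n) : Prop :=
  F y /\ forall z, F z -> ip G (x - y) z = 0.

Definition proj_image (R : realType) (n : nat) (G : 'M[R]_n) (F : set 'rV[R]_n)
  (S : set 'rV[R]_n) : set 'rV[R]_n :=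
  [set y | exists2 x, S x & is_orth_proj G F x y].

(* The projection of the cube lies in DV(L): for v in L one has (pi x, v) = (x, v), and
   since the canonical basis is orthogonal, DV(Z^n) is the cube [-1/2, 1/2]^n.  Conversely,
   let y be in DV(L) and let x minimise |y - pi x|^2 over the cube.  The residual
   r = y - pi x lies in F, and minimality forces x_i = sign(r_i)/2 wherever r_i <> 0.  If
   r <> 0, the zonotopal hypothesis yields an elementary u in L conformal to r (nonzero only
   where r is, with the same signs); then 2 (x, u) = (u, u) and (r, u) > 0, so
   2 (y, u) > (u, u), contradicting y in DV(L).  Hence y = pi x. *)

From HB Require Import structures.
From mathcomp Require Import all_boot all_order all_algebra.
From mathcomp Require Import boolp classical_sets reals ring lra.
From mathcomp Require Import topology normedtype derive matrix_normedtype.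
Import Order.TTheory GRing.Theory Num.Theory numFieldNormedType.Exports.
Local Open Scope ring_scope.
Local Open Scope classical_set_scope.
Set Implicit Arguments. Unset Strict Implicit. Unset Printing Implicit Defensive.

Section Bilinear.
Variables (R : realType) (n : nat) (G : 'M[R]_n).

Lemma ipDl x y z : ip G (x + y) z = ip G x z + ip G y z.
Proof. by rewrite /ip !mulmxDl mxE. Qed.

Lemma ipNl x z : ip G (- x) z = - ip G x z.
Proof. by rewrite /ip !mulNmx mxE. Qed.

Lemma ipBl x y z : ip G (x - y) z = ip G x z - ip G y z.
Proof. by rewrite ipDl ipNl. Qed.

Lemma ipBr x y z : ip G x (y - z) = ip G x y - ip G x z.
Proof. by rewrite /ip raddfB /= mulmxBr mxE [X in _ + X]mxE. Qed.

Lemma ipNr x z : ip G x (- z) = - ip G x z.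
Proof. by rewrite /ip raddfN /= mulmxN mxE. Qed.

Lemma ipZl a x z : ip G (a *: x) z = a * ip G x z.
Proof. by rewrite /ip -!scalemxAl mxE. Qed.

Lemma ipZr a x z : ip G x (a *: z) = a * ip G x z.
Proof. by rewrite /ip linearZ /= -scalemxAr mxE. Qed.

Lemma ip0l z : ip G 0 z = 0.
Proof. by rewrite /ip !mul0mx mxE. Qed.

Hypothesis G_sym : G^T = G.

Lemma ipC x y : ip G x y = ip G y x.
Proof.
rewrite /ip; transitivity ((x *m G *m y^T)^T ord0 ord0); first by rewrite [RHS]mxE.
by rewrite !trmx_mul trmxK G_sym mulmxA.
Qed.

Lemma ip_subsq x v : ip G (x - v) (x - v) = ip G x x - 2 * ip G x v + ip G v v.
Proof. rewrite ipBl !ipBr (ipC v x); ring. Qed.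

Lemma ip_le_subsqE x v :
  (ip G x x <= ip G (x - v) (x - v)) = (2 * ip G x v <= ip G v v).
Proof. by rewrite ip_subsq -addrA lerDl addrC subr_ge0. Qed.

End Bilinear.

Section DiagonalForm.
Variables (R : realType) (n : nat) (G : 'M[R]_n).
Hypothesis G_diag : canonical_basis_orthogonal G.

Lemma ip_diagE x y : ip G x y = \sum_i G i i * x ord0 i * y ord0 i.
Proof.
rewrite /ip mxE; apply: eq_bigr => j _.
rewrite !mxE (bigD1 j) //= big1 ?addr0; first by rewrite [x _ _ * _]mulrC.
by move=> i ij; rewrite G_diag ?mul0r ?mulr0.
Qed.

Lemma ip_delta x i : ip G x (delta_mx 0 i) = G i i * x ord0 i.
Proof.
rewrite ip_diagE (bigD1 i) //= big1 ?addr0; first by rewrite mxE !eqxx mulr1.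
by move=> j ji; rewrite mxE (negbTE ji) andbF mulr0.
Qed.

Lemma diag_gt0 : is_inner_product G -> forall i, 0 < G i i.
Proof.
case=> _ G_pos i; have := G_pos (delta_mx 0 i).
rewrite ip_delta mxE !eqxx mulr1; apply; apply/eqP.
by move/matrixP/(_ ord0 i); rewrite !mxE !eqxx; apply/eqP; rewrite oner_eq0.
Qed.

End DiagonalForm.

Lemma int_norm_le_sqr (z : int) : `|z| <= z * z.
Proof.
have [->|z0] := eqVneq z 0; first by [].
rewrite -[z * z]ger0_norm ?sqr_ge0 // normrM ler_peMr //.
by rewrite -gtz0_ge1 normr_gt0.
Qed.

Lemma mul2_int_le_sqr (R : realType) (x : R) (z : int) :
  - (1 / 2) <= x <= 1 / 2 -> 2 * x * z%:~R <= z%:~R * z%:~R.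
Proof.
move=> x_half; have x_le : `|x| <= 1 / 2 by rewrite ler_norml.
have x2_le : `|2 * x| <= 1 by rewrite normrM ger0_norm //; lra.
apply: le_trans (ler_norm _) _; rewrite normrM.
apply: le_trans (ler_piMl _ x2_le) _ => //.
by rewrite -intr_norm -intrM ler_int int_norm_le_sqr.
Qed.

Lemma toR_delta (R : realType) n i :
  toR R (delta_mx (0 : 'I_1) i) = delta_mx 0 i :> 'rV[R]_n.
Proof. by apply/matrixP => a b; rewrite !mxE; case: (_ && _). Qed.

Lemma DV_Zn_cube (R : realType) (n : nat) (G : 'M[R]_n) :
  is_inner_product G -> canonical_basis_orthogonal G -> DV_Zn G = @cube R n.
Proof.
move=> G_ip G_diag; have G_sym := G_ip.1.
apply/seteqP; split => x /= x_DV.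
- move=> i; have Gii_gt0 := diag_gt0 G_diag G_ip i.
  have := x_DV (delta_mx 0 i); have := x_DV (- delta_mx 0 i).
  rewrite !ip_le_subsqE // /toR map_mxN -/(toR R _) toR_delta ipNl.
  rewrite !ipNr !ip_delta // mxE !eqxx mulr1 => h1 h2.
  by apply/andP; split; nra.
- move=> v; rewrite ip_le_subsqE // !ip_diagE // mulr_sumr; apply: ler_sum => i _.
  rewrite !mxE -mulrA mulrCA -mulrA ler_pM2l ?(diag_gt0 G_diag) // mulrA.
  exact: mul2_int_le_sqr.
Qed.

Lemma is_orth_proj_ip (R : realType) (n : nat) (G : 'M[R]_n) F x y z :
  is_orth_proj G F x y -> F z -> ip G y z = ip G x z.
Proof. by case=> _ orth /orth /eqP; rewrite ipBl subr_eq0 eq_sym => /eqP. Qed.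

Section OrthogonalProjection.
Variables (R : realType) (n k : nat) (B : 'M[int]_(k, n)) (G : 'M[R]_n).
Hypotheses (G_ip : is_inner_product G) (B_free : row_free (toR R B)).

Let Br := toR R B.
Let gram := Br *m G *m Br^T.

Lemma gram_unit : gram \in unitmx.
Proof.
rewrite -row_free_unit -kermx_eq0; apply/rowV0P => c /sub_kermxP c_gram.
have ip_c : ip G (c *m Br) (c *m Br) = (c *m gram *m c^T) ord0 ord0.
  by rewrite /ip /gram trmx_mul !mulmxA.
apply/eqP; rewrite -(mulmx_free_eq0 _ B_free); apply: contraT => /G_ip.2.
by rewrite ip_c c_gram mul0mx mxE ltxx.
Qed.

Definition proj_mx := G *m Br^T *m invmx gram *m Br.

Lemma proj_mxP x : is_orth_proj G (span_lat B) x (x *m proj_mx).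
Proof.
split; first by exists (x *m G *m Br^T *m invmx gram); rewrite // /proj_mx !mulmxA.
move=> _ [c _ <-]; rewrite /ip -/Br trmx_mul mulmxA mulmxBl mulmxBl /proj_mx !mulmxA.
have -> : x *m G *m Br^T *m invmx gram *m Br *m G *m Br^T
    = x *m G *m Br^T *m (invmx gram *m gram) by rewrite /gram !mulmxA.
by rewrite mulVmx ?gram_unit // mulmx1 subrr mul0mx mxE.
Qed.

End OrthogonalProjection.

Lemma toRM (R : realType) (a b c : nat) (A : 'M[int]_(a, b)) (C : 'M[int]_(b, c)) :
  toR R (A *m C) = toR R A *m toR R C.
Proof. exact: map_mxM. Qed.

Lemma span_lat_lattice (R : realType) (n k : nat) (B : 'M[int]_(k, n)) v :
  lattice B v -> span_lat (R:=R) B (toR R v).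
Proof. by case=> c _ <-; exists (toR R c); rewrite // toRM. Qed.

Lemma proj_DV_Zn_sub_DV_lat (R : realType) (n k : nat) (B : 'M[int]_(k, n))
    (G : 'M[R]_n) :
  G^T = G -> proj_image G (span_lat B) (DV_Zn G) `<=` DV_lat G B.
Proof.
move=> G_sym y [x x_DV y_proj]; split; first by case: y_proj.
move=> v /(span_lat_lattice R) /(is_orth_proj_ip y_proj) yv.
by rewrite ip_le_subsqE // yv -ip_le_subsqE.
Qed.

Lemma map_intr_eq0 (F : numDomainType) (m n : nat) (A : 'M[int]_(m, n)) :
  (map_mx (intr : int -> F) A == 0) = (A == 0).
Proof.
apply/eqP/eqP => [/matrixP A0 | ->]; last exact: map_mx0.
by apply/matrixP => i j; have /eqP := A0 i j; rewrite !mxE intr_eq0 => /eqP.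
Qed.

Lemma toR_eq0 (R : realType) (m n : nat) (A : 'M[int]_(m, n)) : (toR R A == 0) = (A == 0).
Proof. exact: map_intr_eq0. Qed.

Lemma rat_row_scale_int (m : nat) (c : 'rV[rat]_m) :
  exists2 d : int, d != 0 & exists z : 'rV[int]_m, map_mx intr z = d%:~R *: c.
Proof.
pose d := \prod_j denq (c ord0 j).
exists d; first by apply/prodf_neq0 => j _; apply: denq_neq0.
exists (map_mx numq (d%:~R *: c)); apply/rowP => j; rewrite !mxE numqK // Qint_def.
by rewrite mulrC [d](bigD1 j) //= rmorphM mulrA -numqE -rmorphM denq_int.
Qed.

Lemma int_kernel_neq0 (R : realType) (k n : nat) (M : 'M[int]_(k, n)) :
  ~~ row_free (toR R M) -> exists2 z : 'rV[int]_k, z != 0 & z *m M = 0.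
Proof.
have -> : row_free (toR R M) = row_free (map_mx (intr : int -> rat) M).
  have -> : toR R M = map_mx ratr (map_mx intr M).
    by apply/matrixP => i j; rewrite !mxE ratr_int.
  by rewrite /row_free mxrank_map.
rewrite -kermx_eq0 => /rowV0Pn[c /sub_kermxP cM c0].
have [d d0 [z zE]] := rat_row_scale_int c.
exists z; first by rewrite -(map_intr_eq0 rat) zE scaler_eq0 intr_eq0 negb_or d0.
by apply/eqP; rewrite -(map_intr_eq0 rat) map_mxM zE -scalemxAl cM scaler0.
Qed.

Definition rsupp (R : numDomainType) (n : nat) (v : 'rV[R]_n) : {set 'I_n} :=
  [set i | v ord0 i != 0].

Lemma rsupp_toR (R : realType) (n : nat) (u : 'rV[int]_n) : rsupp (toR R u) = supp u.
Proof. by apply/setP => i; rewrite !inE mxE intr_eq0. Qed.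

Lemma span_lat_lattice_supp (R : realType) (n k : nat) (B : 'M[int]_(k, n))
    (v : 'rV[R]_n) :
  row_free (toR R B) -> span_lat B v -> v != 0 ->
  exists z, [/\ lattice B z, z != 0 & (supp z \subset rsupp v)%SET].
Proof.
(* B masked to the zero coordinates of v has a nonzero real kernel vector, hence an integral one. *)
move=> B_free [c _ vE] v0.
pose mask : 'rV[int]_n := \row_j (v ord0 j == 0)%:R.
have c0 : c != 0 by apply: contraNneq v0 => c0; rewrite -vE c0 mul0mx.
have c_mask : c *m toR R (B *m diag_mx mask) = 0.
  rewrite toRM /toR map_diag_mx mulmxA vE; apply/rowP => j; rewrite mul_mx_diag !mxE.
  by case: eqP => [->|]; rewrite ?mul0r ?mulr0.
have : ~~ row_free (toR R (B *m diag_mx mask)).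
  by apply: contraL c0 => free; rewrite negbK -(mulmx_free_eq0 _ free) c_mask.
case/int_kernel_neq0 => a a0 aBmask.
exists (a *m B); split; first by exists a.
  by rewrite -(toR_eq0 R) toRM mulmx_free_eq0 // toR_eq0.
apply/fintype.subsetP => j; rewrite !inE; apply: contraNN => /eqP vj0.
by move/rowP: aBmask => /(_ j); rewrite mulmxA mul_mx_diag !mxE vj0 eqxx mulr1 => ->.
Qed.

Lemma mulr_self_gt0 (R : realDomainType) (x : R) : x != 0 -> 0 < x * x.
Proof. by move=> x0; rewrite -expr2 exprn_even_gt0. Qed.

Lemma rsuppN (R : numDomainType) (n : nat) (v : 'rV[R]_n) : rsupp (- v) = rsupp v.
Proof. by apply/setP => i; rewrite !inE mxE oppr_eq0. Qed.

Lemma row_neq0 (R : nmodType) (n : nat) (v : 'rV[R]_n) : v != 0 -> exists i, v ord0 i != 0.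
Proof.
move=> v0; apply/existsP; apply: contraNT v0 => /existsPn v0.
by apply/eqP/rowP => i; rewrite mxE; apply/eqP/negPn/v0.
Qed.

Section Conformal.
Variables (R : realFieldType) (n : nat).
Implicit Types u v w r : 'rV[R]_n.

Definition conformal w v := forall i, w ord0 i != 0 -> 0 < w ord0 i * v ord0 i.

Lemma conformal_refl v : conformal v v.
Proof. by move=> i; apply: mulr_self_gt0. Qed.

Lemma conformal_subset w v : conformal w v -> (rsupp w \subset rsupp v)%SET.
Proof.
move=> wv; apply/fintype.subsetP => i; rewrite !inE => /wv.
by apply: contraTneq => ->; rewrite mulr0 ltxx.
Qed.

Lemma conformal_trans w v r : conformal w v -> conformal v r -> conformal w r.
Proof.
move=> wv vr i w_i; have wv_i := wv i w_i.
have v_i : v ord0 i != 0 by apply: contraTneq wv_i => ->; rewrite mulr0 ltxx.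
rewrite -(pmulr_lgt0 _ (mulr_self_gt0 v_i)).
have -> : w ord0 i * r ord0 i * (v ord0 i * v ord0 i)
    = (w ord0 i * v ord0 i) * (v ord0 i * r ord0 i) by ring.
by rewrite mulr_gt0 // vr.
Qed.

Lemma conformal_reduce v u i0 :
  (rsupp u \subset rsupp v)%SET -> 0 < u ord0 i0 * v ord0 i0 ->
  exists2 t, 0 < t & conformal (v - t *: u) v /\ (rsupp (v - t *: u) \proper rsupp v)%SET.
Proof.
move=> /fintype.subsetP uv uv_i0.
have uv_i i : u ord0 i != 0 -> v ord0 i != 0 by move=> ui; have := uv i; rewrite !inE; apply.
pose P := [pred i | 0 < u ord0 i * v ord0 i].
pose ratio i := v ord0 i / u ord0 i.
(* The step [t] is the largest one keeping each coordinate of [v] on its side of 0. *)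
have [i1 P_i1 ratio_min] := @real_arg_minP R _ i0 P ratio uv_i0 (fun i _ => num_real _).
have u_i1 : u ord0 i1 != 0 by apply: contraTneq P_i1 => /= ->; rewrite mul0r ltxx.
set t := ratio i1.
have t_gt0 : 0 < t.
  have -> : t = u ord0 i1 * v ord0 i1 / (u ord0 i1 * u ord0 i1) by rewrite /t /ratio; field.
  by rewrite divr_gt0 // mulr_self_gt0.
have wE i : (v - t *: u) ord0 i = v ord0 i - t * u ord0 i by rewrite !mxE.
have w_v : conformal (v - t *: u) v.
  move=> i; rewrite wE => w_i.
  have v_i : v ord0 i != 0.
    by have [u_i0|/uv_i //] := eqVneq (u ord0 i) 0; rewrite u_i0 mulr0 subr0 in w_i.
  rewrite lt_def mulf_neq0 //= mulrBl subr_ge0 -mulrA.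
  have [uv_i_gt0 | uv_i_le0] := ltrP 0 (u ord0 i * v ord0 i).
    have u_i : u ord0 i != 0 by apply: contraTneq uv_i_gt0 => ->; rewrite mul0r ltxx.
    apply: le_trans (ler_wpM2r (ltW uv_i_gt0) (ratio_min i uv_i_gt0)) _.
    by rewrite /ratio mulrA divfK.
  by apply: le_trans (mulr_ge0_le0 (ltW t_gt0) uv_i_le0) _; rewrite -expr2 sqr_ge0.
exists t => //; split=> //; apply/properP; split; first exact: conformal_subset.
by exists i1; rewrite !inE ?uv_i // wE negbK /t /ratio divfK // subrr.
Qed.

End Conformal.

Lemma span_lat_subZ (R : realType) (n k : nat) (B : 'M[int]_(k, n)) (x y : 'rV[R]_n) t :
  span_lat B x -> span_lat B y -> span_lat B (x - t *: y).
Proof. by case=> a _ <- [b _ <-]; exists (a - t *: b); rewrite // mulmxBl scalemxAl. Qed.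

Lemma elementaryN (n : nat) (L : set 'rV[int]_n) u :
  (forall v, L v -> L (- v)) -> elementary L u -> elementary L (- u).
Proof.
move=> LN [Lu u_sign u0 u_min]; split; [exact: LN | | by rewrite oppr_eq0 |].
- move=> i; rewrite mxE; have := u_sign i; rewrite !inE.
  by case/or3P => /eqP ->; rewrite ?opprK ?oppr0 eqxx ?orbT.
- suff -> : supp (- u) = supp u by [].
  by apply/setP => i; rewrite !inE mxE oppr_eq0.
Qed.

Lemma latticeN (k n : nat) (B : 'M[int]_(k, n)) v : lattice B v -> lattice B (- v).
Proof. by case=> c _ <-; exists (- c); rewrite // mulNmx. Qed.

Section ZonotopalLattice.
Variables (R : realType) (n k : nat) (B : 'M[int]_(k, n)).
Hypotheses (B_free : row_free (toR R B)) (B_zon : zonotopal (lattice B)).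

Lemma exists_signed_elementary (v : 'rV[R]_n) : span_lat B v -> v != 0 ->
  exists2 u, elementary (lattice B) u &
    (rsupp (toR R u) \subset rsupp v)%SET /\ exists i, 0 < toR R u ord0 i * v ord0 i.
Proof.
move=> v_span v0.
have [z [z_lat z0 z_supp]] := span_lat_lattice_supp B_free v_span v0.
have [u [u_el u_supp]] := B_zon z_lat z0.
have uv : (rsupp (toR R u) \subset rsupp v)%SET.
  by rewrite rsupp_toR (fintype.subset_trans u_supp z_supp).
have [i u_i] : exists i, toR R u ord0 i != 0.
  by apply/row_neq0; rewrite toR_eq0; case: u_el.
have uv_i : toR R u ord0 i * v ord0 i != 0.
  by rewrite mulf_neq0 //; move/fintype.subsetP: uv => /(_ i); rewrite !inE; apply.
have [uv_i_gt0 | uv_i_lt0] := ltrP 0 (toR R u ord0 i * v ord0 i).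
  by exists u; last by split; last exists i.
exists (- u); first exact: elementaryN (@latticeN _ _ B) u_el.
rewrite /toR map_mxN -/(toR R u) rsuppN; split=> //; exists i.
by rewrite mxE mulNr oppr_gt0 lt_neqAle uv_i uv_i_lt0.
Qed.

Lemma exists_conformal_elementary (r : 'rV[R]_n) : span_lat B r -> r != 0 ->
  exists2 u, elementary (lattice B) u & conformal (toR R u) r.
Proof.
move=> r_span r0.
suff: forall m (v : 'rV[R]_n), #|rsupp v| = m -> span_lat B v -> v != 0 ->
    conformal v r -> exists2 u, elementary (lattice B) u & conformal (toR R u) r.
  by move/(_ _ r erefl r_span r0); apply; apply: conformal_refl.
elim/ltn_ind => m IH v v_card v_span v0 v_r.
have [u u_el [uv [i uv_i]]] := exists_signed_elementary v_span v0.
have [t t_gt0 [w_v w_proper]] := conformal_reduce uv uv_i.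
have [w0 | w_neq0] := eqVneq (v - t *: toR R u) 0.
  exists u => //; apply: conformal_trans v_r.
  have -> : v = t *: toR R u by apply/eqP; rewrite -subr_eq0 w0.
  by move=> j u_j; rewrite [X in _ * X]mxE mulrCA pmulr_rgt0 // mulr_self_gt0.
apply: (IH #|rsupp (v - t *: toR R u)|) => //.
- by rewrite -v_card proper_card.
- by apply: span_lat_subZ => //; apply: span_lat_lattice; case: u_el.
- exact: conformal_trans w_v v_r.
Qed.

End ZonotopalLattice.

Lemma elementary_sqr (R : realType) (n : nat) (L : set 'rV[int]_n) u i :
  elementary L u -> toR R u ord0 i != 0 -> toR R u ord0 i ^+ 2 = 1.
Proof.
case=> _ u_sign _ _; rewrite mxE; have := u_sign i; rewrite !inE.
by case/or3P => /eqP ->; rewrite ?eqxx // => _; rewrite ?sqrrN expr1n.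
Qed.

Lemma ip_conformal_gt0 (R : realType) (n : nat) (G : 'M[R]_n) w v :
  is_inner_product G -> canonical_basis_orthogonal G ->
  conformal w v -> w != 0 -> 0 < ip G w v.
Proof.
move=> G_ip G_diag wv /row_neq0[i w_i].
have term_ge0 j : w ord0 j != 0 -> 0 < G j j * w ord0 j * v ord0 j.
  by move=> w_j; rewrite -mulrA mulr_gt0 ?(diag_gt0 G_diag) ?wv.
rewrite (ip_diagE G_diag) (bigD1 i) //= ltr_wpDr ?term_ge0 //.
apply: sumr_ge0 => j _; have [w_j|/term_ge0/ltW //] := eqVneq (w ord0 j) 0.
by rewrite w_j mulr0 mul0r.
Qed.

Lemma continuous_mulmx_coord (R : realType) (n m : nat) (M : 'M[R]_(n, m)) j :
  continuous (fun x : 'rV[R]_n => (x *m M) ord0 j).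
Proof.
under eq_fun do rewrite mxE.
apply: continuous_big => [|i _ x]; first exact: add_continuous.
by apply: continuousM; [exact: coord_continuous | exact: cst_continuous].
Qed.

Lemma continuous_ip_affine (R : realType) (n : nat) (G P : 'M[R]_n) (y : 'rV[R]_n) :
  continuous (fun x : 'rV[R]_n => ip G (y - x *m P) (y - x *m P)).
Proof.
have -> : (fun x => ip G (y - x *m P) (y - x *m P)) = fun x : 'rV[R]_n =>
    \sum_j ((y *m G) ord0 j - (x *m (P *m G)) ord0 j) * (y ord0 j - (x *m P) ord0 j).
  apply/funext => x; rewrite /ip mxE; apply: eq_bigr => j _.
  by rewrite mulmxBl mulmxA !mxE.
apply: continuous_big => [|j _ x]; first exact: add_continuous.
apply: (continuousM (s := fun x => _) (t := fun x => _));
  apply: (continuousB (f := fun=> _) (g := fun x => _));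
  by [exact: cst_continuous | exact: continuous_mulmx_coord].
Qed.

Lemma cube_argmin (R : realType) (n : nat) (f : 'rV[R]_n -> R) :
  continuous f -> exists2 x, cube x & forall z, cube z -> f x <= f z.
Proof.
move=> f_cont.
have cubeE : @cube R n = [set v | forall i, `[- (1 / 2), 1 / 2]%classic (v ord0 i)].
  apply/funext => v; apply/propext.
  by split=> v_cube i; have := v_cube i; rewrite /= in_itv.
have cube0 : @cube R n !=set0 by exists 0 => i; rewrite mxE; apply/andP; split; lra.
have cube_compact : compact (@cube R n).
  rewrite cubeE; apply: (@rV_compact R n (fun=> `[- (1 / 2), 1 / 2]%classic)) => i.
  exact: segment_compact.
have [x x_cube x_min] := EVT_min_rV cube0 cube_compact (continuous_subspaceT f_cont).
by exists x; [rewrite inE in x_cube | move=> z z_cube; apply: x_min; rewrite inE].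
Qed.

Lemma quadratic_descent_step (R : realFieldType) (a q g : R) :
  0 < a -> 0 <= q -> 0 < g -> exists2 e, 0 < e <= g & e * e * q < 2 * e * a.
Proof.
move=> a_gt0 q_ge0 g_gt0; pose e := Order.min g (a / (q + 1)).
have q1_gt0 : 0 < q + 1 by lra.
have e_gt0 : 0 < e by rewrite lt_min g_gt0 divr_gt0.
have e_le : e * (q + 1) <= a by rewrite -ler_pdivlMr // ge_min lexx orbT.
by exists e; [rewrite e_gt0 ge_min lexx | nra].
Qed.

Section DirichletVoronoi.
Variables (R : realType) (n k : nat) (B : 'M[int]_(k, n)) (G : 'M[R]_n).
Hypotheses (G_ip : is_inner_product G) (G_diag : canonical_basis_orthogonal G).
Hypothesis B_free : row_free (toR R B).

Let G_sym : G^T = G := G_ip.1.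
Let P := proj_mx B G.

Lemma span_lat_sub_proj (y x : 'rV[R]_n) : span_lat B y -> span_lat B (y - x *m P).
Proof.
move=> y_span; rewrite -[x *m P]scale1r; apply: span_lat_subZ => //.
by case: (proj_mxP G_ip B_free x).
Qed.

Lemma argmin_saturated (y x : 'rV[R]_n) :
  span_lat B y -> cube x ->
  (forall z, cube z -> ip G (y - x *m P) (y - x *m P) <= ip G (y - z *m P) (y - z *m P)) ->
  forall i (s : R), s ^+ 2 = 1 -> 0 < s * (y - x *m P) ord0 i -> s * x ord0 i = 1 / 2.
Proof.
move=> y_span x_cube x_min i s s_sqr sr_gt0; set r := y - x *m P in x_min sr_gt0.
have r_span : span_lat B r by apply: span_lat_sub_proj.
have s_norm : `|s| = 1 by apply/eqP; rewrite -sqr_norm_eq1 s_sqr.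
have sx_le : `|s * x ord0 i| <= 1 / 2.
  by rewrite normrM s_norm [X in X <= _]mul1r ler_norml.
apply/eqP; rewrite eq_le (le_trans (ler_norm _) sx_le) /= leNgt; apply/negP => sx_lt.
(* A small move of x_i towards s stays in the cube and lowers the objective. *)
pose d : 'rV[R]_n := s *: delta_mx 0 i.
pose a := ip G r d.
have a_gt0 : 0 < a.
  rewrite /a /d ipZr ip_delta // mulrCA mulr_gt0 ?(diag_gt0 G_diag) //.
have rdP : ip G r (d *m P) = a.
  by rewrite ipC // (is_orth_proj_ip (proj_mxP G_ip B_free d) r_span) ipC.
pose q := ip G (d *m P) (d *m P).
have q_ge0 : 0 <= q.
  by rewrite /q; have [->|/G_ip.2/ltW //] := eqVneq (d *m P) 0; rewrite ip0l.
have gap_gt0 : 0 < 1 / 2 - s * x ord0 i by rewrite subr_gt0.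
have [e /andP[e_gt0 e_le] e_small] := quadratic_descent_step a_gt0 q_ge0 gap_gt0.
have := x_min (x + e *: d); rewrite mulmxDl -scalemxAl opprD addrA -/r.
rewrite (ip_subsq G_sym r) ipZr ipZl ipZr rdP -/q.
suff x_ed_cube : cube (x + e *: d) by move=> /(_ x_ed_cube); lra.
move=> j; rewrite -ler_norml !mxE; have [-> | ji] := eqVneq j i; last first.
  by rewrite andbF mulr0 mulr0 addr0 ler_norml x_cube.
rewrite !eqxx mulr1.
have -> : `|x ord0 i + e * s| = `|s * x ord0 i + e|.
  by rewrite -[LHS]mul1r -s_norm -normrM mulrDr mulrCA -expr2 s_sqr mulr1.
by move: sx_le; rewrite !ler_norml => /andP[? ?]; apply/andP; split; lra.
Qed.

Hypothesis B_zon : zonotopal (lattice B).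

Lemma DV_lat_sub_proj_cube : DV_lat G B `<=` proj_image G (span_lat B) (@cube R n).
Proof.
move=> y [y_span y_DV].
have [x x_cube x_min] := cube_argmin (@continuous_ip_affine R n G P y).
have x_sat := argmin_saturated y_span x_cube x_min.
set r := y - x *m P in x_sat.
have [r0 | r_neq0] := eqVneq r 0.
  exists x => //; have -> : y = x *m P by apply/eqP; rewrite -subr_eq0 -/r r0.
  exact: proj_mxP.
have r_span : span_lat B r by apply: span_lat_sub_proj.
have [u u_el u_r] := exists_conformal_elementary B_free B_zon r_span r_neq0.
have u_lat : lattice B u by case: u_el.
set U := toR R u in u_r.
have xU : 2 * ip G x U = ip G U U.
  rewrite !(ip_diagE G_diag) mulr_sumr; apply: eq_bigr => i _.
  have [U_i | U_i] := eqVneq (U ord0 i) 0; first by rewrite U_i !mulr0.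
  have U_sqr : U ord0 i ^+ 2 = 1 by apply: elementary_sqr u_el U_i.
  have Ux := x_sat i _ U_sqr (u_r i U_i).
  transitivity (G i i * (2 * (U ord0 i * x ord0 i))); first by ring.
  by rewrite Ux -mulrA -expr2 U_sqr; field.
have rU : 0 < ip G r U by rewrite ipC // ip_conformal_gt0 // toR_eq0; case: u_el.
have yU : ip G y U = ip G r U + ip G x U.
  rewrite /r ipBl (is_orth_proj_ip (proj_mxP G_ip B_free x)) ?subrK //.
  exact: span_lat_lattice.
have := y_DV u u_lat; rewrite ip_le_subsqE // -/U yU => yU_le.
lra.
Qed.

End DirichletVoronoi.

Theorem theorem1 (R : realType) (n k : nat) (B : 'M[int]_(k, n)) (G : 'M[R]_n) :
  (0 < n)%N ->
  row_free (toR R B) ->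
  is_inner_product G ->
  canonical_basis_orthogonal G ->
  zonotopal (lattice B) ->
  DV_lat G B = proj_image G (span_lat (R:=R) B) (DV_Zn G) /\
  proj_image G (span_lat (R:=R) B) (DV_Zn G) = proj_image G (span_lat (R:=R) B) (@cube R n).
Proof.
move=> _ B_free G_ip G_diag B_zon.
have DV_Zn_eq := DV_Zn_cube G_ip G_diag.
split; last by rewrite DV_Zn_eq.
apply/seteqP; split; last exact: proj_DV_Zn_sub_DV_lat G_ip.1.
by rewrite DV_Zn_eq; apply: DV_lat_sub_proj_cube.
Qed.
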